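(* Let $\mathcal G$ be a groupoid and let $\{\mathcal{G}_i\}_{i\in I}$ be its homogeneous components. Then there is an isomorphism of 2-groups $\mathbb{S}ym(\mathcal{G})\cong\prod_{i\in I}\mathbb{S}ym(\mathcal{G}_i)$, given by sending a self-equivalence (resp. natural isomorphism) to the family of its restrictions to the homogeneous components.
   Context: A homogeneous component of a groupoid $\mathcal G$ is the full subgroupoid formed by the union of all connected components of $\mathcal G$ whose objects have automorphism group isomorphic to a given group; $\mathcal G$ is the disjoint union of its homogeneous components. A 2-group is a monoidal groupoid in which every object has a weak tensor inverse; an isomorphism of 2-groups is a monoidal functor with a strict inverse monoidal functor. For a groupoid $\mathcal K$, $\mathbb{S}ym(\mathcal{K})$ is the 2-group whose objects are self-equivalences of $\mathcal K$ and whose morphisms are natural isomorphisms between them, with tensor product given by composition and horizontal composition. The product of 2-groups is the product groupoid with componentwise monoidal structure. *)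

From Stdlib Require Import FunctionalExtensionality ProofIrrelevance.

Set Implicit Arguments.
Unset Strict Implicit.

Record Groupoid := {
  ob :> Type;
  hom : ob -> ob -> Type;
  gid : forall x, hom x x;
  gcomp : forall x y z, hom y z -> hom x y -> hom x z;
  ginv : forall x y, hom x y -> hom y x;
  gassoc : forall x y z w (h : hom z w) (g : hom y z) (f : hom x y),
      gcomp h (gcomp g f) = gcomp (gcomp h g) f;
  gid_l : forall x y (f : hom x y), gcomp (gid y) f = f;
  gid_r : forall x y (f : hom x y), gcomp f (gid x) = f;
  ginv_l : forall x y (f : hom x y), gcomp (ginv f) f = gid x;
  ginv_r : forall x y (f : hom x y), gcomp f (ginv f) = gid y }.

Arguments hom {g0} x y : rename.
Arguments gid {g0} x : rename.
Arguments gcomp {g0 x y z} _ _ : rename.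
Arguments ginv {g0 x y} _ : rename.

Record Functor (C D : Groupoid) := {
  fobj :> C -> D;
  fmap : forall x y, hom x y -> hom (fobj x) (fobj y);
  fmap_id : forall x, fmap (gid x) = gid (fobj x);
  fmap_comp : forall x y z (g : hom y z) (f : hom x y),
      fmap (gcomp g f) = gcomp (fmap g) (fmap f) }.

Arguments fmap {C D} f {x y} _ : rename.

Definition fcomp (C D E : Groupoid) (F : Functor D E) (G : Functor C D)
  : Functor C E.
Proof.
  refine (@Build_Functor C E (fun x => F (G x))
            (fun x y f => fmap F (fmap G f)) _ _).
  - intros x. rewrite !fmap_id. reflexivity.
  - intros x y z g f. rewrite !fmap_comp. reflexivity.
Defined.

Definition fid (C : Groupoid) : Functor C C.
Proof.
  refine (@Build_Functor C C (fun x => x) (fun x y f => f) _ _);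
    reflexivity.
Defined.

Record NatTrans (C D : Groupoid) (F G : Functor C D) := {
  ntc :> forall x, hom (F x) (G x);
  ntnat : forall x y (f : hom x y),
      gcomp (ntc y) (fmap F f) = gcomp (fmap G f) (ntc x) }.

Lemma nt_eq (C D : Groupoid) (F G : Functor C D) (a b : NatTrans F G) :
  (forall x, a x = b x) -> a = b.
Proof.
  destruct a as [a Ha], b as [b Hb]; simpl; intros H.
  assert (a = b) by (apply functional_extensionality_dep; exact H).
  subst b. f_equal. apply proof_irrelevance.
Qed.

Definition ntid (C D : Groupoid) (F : Functor C D) : NatTrans F F.
Proof.
  refine (@Build_NatTrans C D F F (fun x => gid (F x)) _).
  intros. rewrite gid_l, gid_r. reflexivity.
Defined.

Definition vcomp (C D : Groupoid) (F G H : Functor C D)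
  (b : NatTrans G H) (a : NatTrans F G) : NatTrans F H.
Proof.
  refine (@Build_NatTrans C D F H (fun x => gcomp (b x) (a x)) _).
  intros x y f.
  rewrite <- gassoc, (ntnat a), gassoc, (ntnat b), <- gassoc. reflexivity.
Defined.

Definition ntinv (C D : Groupoid) (F G : Functor C D)
  (a : NatTrans F G) : NatTrans G F.
Proof.
  refine (@Build_NatTrans C D G F (fun x => ginv (a x)) _).
  intros x y f.
  transitivity (gcomp (gcomp (ginv (a y)) (gcomp (fmap G f) (a x)))
                      (ginv (a x))).
  - rewrite <- (gassoc (ginv (a y)) _ (ginv (a x))).
    rewrite <- (gassoc (fmap G f) (a x) (ginv (a x))), ginv_r, gid_r.
    reflexivity.
  - rewrite <- (ntnat a), gassoc, ginv_l, gid_l. reflexivity.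
Defined.

Definition hcomp (C D E : Groupoid) (F F' : Functor D E) (G G' : Functor C D)
  (a : NatTrans F F') (b : NatTrans G G') :
  NatTrans (fcomp F G) (fcomp F' G').
Proof.
  refine (@Build_NatTrans C E (fcomp F G) (fcomp F' G')
            (fun x => gcomp (a (G' x)) (fmap F (b x))) _).
  intros x y f; simpl.
  rewrite <- gassoc, <- fmap_comp, (ntnat b), fmap_comp, gassoc,
    (ntnat a), <- gassoc. reflexivity.
Defined.

Definition is_equiv (C : Groupoid) (F : Functor C C) : Prop :=
  exists G : Functor C C,
    inhabited (NatTrans (fcomp G F) (fid C)) /\
    inhabited (NatTrans (fcomp F G) (fid C)).

Definition nt_comp4 (C : Groupoid) (X1 X2 Y1 Y2 : Functor C C)
  (a1 : NatTrans (fcomp X1 Y1) (fid C)) (a2 : NatTrans (fcomp X2 Y2) (fid C)) :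
  NatTrans (fcomp (fcomp X2 X1) (fcomp Y1 Y2)) (fid C).
Proof.
  refine (@Build_NatTrans C C (fcomp (fcomp X2 X1) (fcomp Y1 Y2)) (fid C)
     (fun x => gcomp (a2 x) (fmap X2 (a1 (Y2 x)))) _).
  intros x y f; simpl.
  pose proof (ntnat a1 (fmap Y2 f)) as H1; simpl in H1.
  pose proof (ntnat a2 f) as H2; simpl in H2.
  rewrite <- gassoc, <- fmap_comp, H1, fmap_comp, gassoc, H2, <- gassoc.
  reflexivity.
Defined.

Lemma is_equiv_comp (C : Groupoid) (F1 F2 : Functor C C) :
  is_equiv F1 -> is_equiv F2 -> is_equiv (fcomp F1 F2).
Proof.
  intros [G1 [[a1] [b1]]] [G2 [[a2] [b2]]].
  exists (fcomp G2 G1); split; constructor.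
  - exact (nt_comp4 a1 a2).
  - exact (nt_comp4 b2 b1).
Qed.

Definition nt_idid (C : Groupoid) : NatTrans (fcomp (fid C) (fid C)) (fid C).
Proof.
  refine (@Build_NatTrans C C (fcomp (fid C) (fid C)) (fid C) (fun x => gid x) _).
  intros; simpl; rewrite gid_l, gid_r; reflexivity.
Defined.

Lemma is_equiv_id (C : Groupoid) : is_equiv (fid C).
Proof. exists (fid C); split; constructor; apply nt_idid. Qed.

Definition SymOb (K : Groupoid) := {F : Functor K K | is_equiv F}.

Definition SymG (K : Groupoid) : Groupoid.
Proof.
  refine (@Build_Groupoid (SymOb K)
            (fun A B => NatTrans (proj1_sig A) (proj1_sig B))
            (fun A => ntid (proj1_sig A))
            (fun A B C b a => vcomp b a)
            (fun A B a => ntinv a) _ _ _ _ _);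
  intros; apply nt_eq; intros; simpl.
  - apply gassoc.
  - apply gid_l.
  - apply gid_r.
  - apply ginv_l.
  - apply ginv_r.
Defined.

Record MonGpd := {
  mgpd :> Groupoid;
  tens : mgpd -> mgpd -> mgpd;
  tens_hom : forall a b c d, hom a b -> hom c d -> hom (tens a c) (tens b d);
  munit : mgpd;
  massoc : forall a b c, hom (tens (tens a b) c) (tens a (tens b c));
  mlunit : forall a, hom (tens munit a) a;
  mrunit : forall a, hom (tens a munit) a }.

Arguments tens {m} _ _.
Arguments tens_hom {m a b c d} _ _.
Arguments munit m : clear implicits.
Arguments massoc {m} a b c.
Arguments mlunit {m} a.
Arguments mrunit {m} a.

Definition nt_assoc (C : Groupoid) (F1 F2 F3 : Functor C C) :
  NatTrans (fcomp (fcomp F1 F2) F3) (fcomp F1 (fcomp F2 F3)).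
Proof.
  refine (@Build_NatTrans C C (fcomp (fcomp F1 F2) F3) (fcomp F1 (fcomp F2 F3))
            (fun x => gid (F1 (F2 (F3 x)))) _).
  intros; simpl; rewrite gid_l, gid_r; reflexivity.
Defined.

Definition nt_lunit (C : Groupoid) (F : Functor C C) :
  NatTrans (fcomp (fid C) F) F.
Proof.
  refine (@Build_NatTrans C C (fcomp (fid C) F) F (fun x => gid (F x)) _).
  intros; simpl; rewrite gid_l, gid_r; reflexivity.
Defined.

Definition nt_runit (C : Groupoid) (F : Functor C C) :
  NatTrans (fcomp F (fid C)) F.
Proof.
  refine (@Build_NatTrans C C (fcomp F (fid C)) F (fun x => gid (F x)) _).
  intros; simpl; rewrite gid_l, gid_r; reflexivity.
Defined.

Definition SymM (K : Groupoid) : MonGpd :=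
  @Build_MonGpd (SymG K)
    (fun A B => exist _ (fcomp (proj1_sig A) (proj1_sig B))
                  (is_equiv_comp (proj2_sig A) (proj2_sig B)))
    (fun A B C D a b => hcomp a b)
    (exist _ (fid K) (is_equiv_id K))
    (fun A B C => nt_assoc (proj1_sig A) (proj1_sig B) (proj1_sig C))
    (fun A => nt_lunit (proj1_sig A))
    (fun A => nt_runit (proj1_sig A)).

Definition ProdG (I : Type) (M : I -> Groupoid) : Groupoid.
Proof.
  refine (@Build_Groupoid (forall i, M i)
            (fun a b => forall i, hom (a i) (b i))
            (fun a i => gid (a i))
            (fun a b c g f i => gcomp (g i) (f i))
            (fun a b f i => ginv (f i)) _ _ _ _ _);
  intros; apply functional_extensionality_dep; intros i.
  - apply gassoc.
  - apply gid_l.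
  - apply gid_r.
  - apply ginv_l.
  - apply ginv_r.
Defined.

Definition ProdM (I : Type) (M : I -> MonGpd) : MonGpd :=
  @Build_MonGpd (ProdG (fun i => mgpd (M i)))
    (fun a b i => tens (a i) (b i))
    (fun a b c d f g i => tens_hom (f i) (g i))
    (fun i => munit (M i))
    (fun a b c i => massoc (a i) (b i) (c i))
    (fun a i => mlunit (a i))
    (fun a i => mrunit (a i)).

Record MonFunctor (M N : MonGpd) := {
  mf :> Functor M N;
  mf_mu : forall a b : M, hom (tens (mf a) (mf b)) (mf (tens a b));
  mf_eps : hom (munit N) (mf (munit M));
  mf_mu_nat : forall (a a' b b' : M) (f : hom a a') (g : hom b b'),
      gcomp (mf_mu a' b') (tens_hom (fmap mf f) (fmap mf g))
      = gcomp (fmap mf (tens_hom f g)) (mf_mu a b);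
  mf_assoc : forall a b c : M,
      gcomp (fmap mf (massoc a b c))
            (gcomp (mf_mu (tens a b) c) (tens_hom (mf_mu a b) (gid (mf c))))
      = gcomp (mf_mu a (tens b c))
              (gcomp (tens_hom (gid (mf a)) (mf_mu b c))
                     (massoc (mf a) (mf b) (mf c)));
  mf_lunit : forall a : M,
      gcomp (fmap mf (mlunit a))
            (gcomp (mf_mu (munit M) a) (tens_hom mf_eps (gid (mf a))))
      = mlunit (mf a);
  mf_runit : forall a : M,
      gcomp (fmap mf (mrunit a))
            (gcomp (mf_mu a (munit M)) (tens_hom (gid (mf a)) mf_eps))
      = mrunit (mf a) }.

Definition is_2group_iso (M N : MonGpd) (Phi : MonFunctor M N) : Prop :=
  exists Psi : MonFunctor N M,
    fcomp (mf Psi) (mf Phi) = fid M /\ fcomp (mf Phi) (mf Psi) = fid N.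

Definition SubG (G : Groupoid) (P : G -> Prop) : Groupoid.
Proof.
  refine (@Build_Groupoid {x : G | P x}
            (fun x y => hom (proj1_sig x) (proj1_sig y))
            (fun x => gid (proj1_sig x))
            (fun x y z g f => gcomp g f)
            (fun x y f => ginv f) _ _ _ _ _); intros.
  - apply gassoc.
  - apply gid_l.
  - apply gid_r.
  - apply ginv_l.
  - apply ginv_r.
Defined.

Definition aut_iso (G : Groupoid) (x y : G) : Prop :=
  exists (phi : hom x x -> hom y y) (psi : hom y y -> hom x x),
    (forall f, psi (phi f) = f) /\ (forall g, phi (psi g) = g) /\
    (forall f g, phi (gcomp f g) = gcomp (phi f) (phi g)).

(* Index set of the homogeneous components: one for each isomorphism class
   of automorphism group occurring in G, represented by the predicate
   "Aut(y) is isomorphic to Aut(x)" for a representative x. *)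
Definition HomogIdx (G : Groupoid) :=
  {P : G -> Prop | exists x : G, P = aut_iso x}.

Definition HomogComp (G : Groupoid) (i : HomogIdx G) : Groupoid :=
  SubG (proj1_sig i).

Definition restr (G : Groupoid) (P : G -> Prop) (F : Functor G G)
  (p : forall x, P x -> P (F x)) : Functor (SubG P) (SubG P).
Proof.
  refine (@Build_Functor (SubG P) (SubG P)
            (fun x => exist _ (F (proj1_sig x)) (p _ (proj2_sig x)))
            (fun x y f => fmap F f) _ _); intros; simpl.
  - apply fmap_id.
  - apply fmap_comp.
Defined.

Definition restr_nt (G : Groupoid) (P : G -> Prop) (F F' : Functor G G)
  (p : forall x, P x -> P (F x)) (p' : forall x, P x -> P (F' x))
  (a : NatTrans F F') : NatTrans (restr p) (restr p').
Proof.
  refine (@Build_NatTrans (SubG P) (SubG P) (restr p) (restr p')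
            (fun x => a (proj1_sig x)) _).
  intros; simpl. apply (ntnat a).
Defined.

Definition PresComps (G : Groupoid) : Prop :=
  forall F : Functor G G, is_equiv F ->
  forall (i : HomogIdx G) (x : G), proj1_sig i x -> proj1_sig i (F x).

Definition restr_nt2 (G : Groupoid) (P : G -> Prop) (F1 F2 : Functor G G)
  (p1 : forall x, P x -> P (F1 x)) (p2 : forall x, P x -> P (F2 x))
  (a : NatTrans (fcomp F1 F2) (fid G)) :
  NatTrans (fcomp (restr p1) (restr p2)) (fid (SubG P)).
Proof.
  refine (@Build_NatTrans (SubG P) (SubG P)
            (fcomp (restr p1) (restr p2)) (fid (SubG P))
            (fun x => a (proj1_sig x)) _).
  intros x y f; simpl. exact (ntnat a f).
Defined.

Lemma restr_equiv (G : Groupoid) (pres : PresComps G) (F : Functor G G)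
  (hF : is_equiv F) (i : HomogIdx G) :
  is_equiv (restr (pres F hF i)).
Proof.
  destruct hF as [H [[a] [b]]] eqn:E.
  assert (hH : is_equiv H) by (exists F; split; constructor; assumption).
  exists (restr (pres H hH i)); split; constructor.
  - exact (restr_nt2 _ _ a).
  - exact (restr_nt2 _ _ b).
Qed.

Definition Restriction (G : Groupoid) (pres : PresComps G) :
  Functor (SymM G) (ProdM (fun i : HomogIdx G => SymM (HomogComp i))).
Proof.
  refine (@Build_Functor (SymM G)
            (ProdM (fun i : HomogIdx G => SymM (HomogComp i)))
     (fun F i => exist _ (restr (pres _ (proj2_sig F) i))
                          (restr_equiv pres (proj2_sig F) i))
     (fun F F' a i => restr_nt _ _ a) _ _);
  intros; apply functional_extensionality_dep; intros i;
  apply nt_eq; intros; reflexivity.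
Defined.

(* A morphism x -> y conjugates Aut(x) onto Aut(y), and a self-equivalence F
   restricts to an isomorphism Aut(x) ~ Aut(F x).  So homogeneous components are
   unions of connected components, every self-equivalence maps each component into
   itself, and restriction is a strictly monoidal functor.  Conversely, since every
   object x lies in exactly one component (that of Aut(x)) and morphisms never leave
   it, a family of self-equivalences of the components glues to a self-equivalence
   of the whole groupoid.  Gluing is a strict inverse of restriction: the composites
   are identities up to transports along equalities of objects, which collapse by
   proof irrelevance. *)

From Stdlib Require Import FunctionalExtensionality ProofIrrelevance ClassicalEpsilon PropExtensionality.

Set Implicit Arguments.
Unset Strict Implicit.

Section Transport.
Variable C : Groupoid.

Definition idtohom (u v : C) (e : u = v) : hom u v :=
  match e in _ = w return hom u w with eq_refl => gid u end.

Lemma idtohom_irrel (u v : C) (e1 e2 : u = v) : idtohom e1 = idtohom e2.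
Proof. now rewrite (proof_irrelevance _ e1 e2). Qed.

Lemma idtohom_loop (u : C) (e : u = u) : idtohom e = gid u.
Proof. exact (idtohom_irrel e eq_refl). Qed.

Lemma idtohom_trans (u v w : C) (e1 : u = v) (e2 : v = w) :
  gcomp (idtohom e2) (idtohom e1) = idtohom (eq_trans e1 e2).
Proof. destruct e1, e2; apply gid_l. Qed.

Lemma idtohom_trans_comp (u v w z : C) (e1 : u = v) (e2 : v = w) (k : hom z u) :
  gcomp (idtohom e2) (gcomp (idtohom e1) k) = gcomp (idtohom (eq_trans e1 e2)) k.
Proof. now rewrite gassoc, idtohom_trans. Qed.

End Transport.

Lemma functor_ext (C D : Groupoid) (F G : Functor C D) (e : forall x, F x = G x) :
  (forall x y (f : hom x y),
      fmap G f = gcomp (idtohom (e y)) (gcomp (fmap F f) (idtohom (eq_sym (e x))))) ->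
  F = G.
Proof.
  destruct F as [F Fm F1 F2], G as [G Gm G1 G2]; simpl in *.
  assert (E : F = G) by (apply functional_extensionality; exact e).
  subst G; intros H.
  assert (Em : Fm = Gm).
  { do 2 (apply functional_extensionality_dep; intro).
    apply functional_extensionality; intro f.
    now rewrite H, !idtohom_loop, gid_l, gid_r. }
  subst Gm; f_equal; apply proof_irrelevance.
Qed.

Ltac transport_simpl :=
  repeat rewrite <- gassoc;
  repeat first [ rewrite idtohom_trans_comp | rewrite idtohom_trans
               | rewrite idtohom_loop | rewrite gid_l | rewrite gid_r ].

(* Closes equations between composites that differ only in the equality proofs transported along. *)
Ltac transport_congr := repeat first [ reflexivity | apply idtohom_irrel | f_equal ].

Section AutIso.
Variable G : Groupoid.

Lemma aut_iso_refl (x : G) : aut_iso x x.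
Proof. now exists (fun f => f), (fun f => f). Qed.

Lemma aut_iso_sym (x y : G) : aut_iso x y -> aut_iso y x.
Proof.
  intros [phi [psi [H1 [H2 H3]]]]; exists psi, phi; repeat split; auto.
  intros f g; now rewrite <- (H2 f), <- (H2 g), <- H3, !H1.
Qed.

Lemma aut_iso_trans (x y z : G) : aut_iso x y -> aut_iso y z -> aut_iso x z.
Proof.
  intros [phi [psi [H1 [H2 H3]]]] [phi' [psi' [H1' [H2' H3']]]].
  exists (fun f => phi' (phi f)), (fun f => psi (psi' f)); repeat split.
  - intros f; now rewrite H1', H1.
  - intros f; now rewrite H2, H2'.
  - intros f g; now rewrite H3, H3'.
Qed.

Lemma aut_iso_of_hom (x y : G) (f : hom x y) : aut_iso x y.
Proof.
  exists (fun g => gcomp f (gcomp g (ginv f))), (fun h => gcomp (ginv f) (gcomp h f)).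
  repeat split.
  - intros g; now rewrite !gassoc, ginv_l, gid_l, <- gassoc, ginv_l, gid_r.
  - intros g; now rewrite !gassoc, ginv_r, gid_l, <- gassoc, ginv_r, gid_r.
  - intros g h; rewrite !gassoc; f_equal; rewrite <- !gassoc; do 2 f_equal.
    now rewrite (gassoc (ginv f) f), ginv_l, gid_l.
Qed.

Lemma fmap_inj_of_left_quasi_inverse (F H : Functor G G)
    (b : NatTrans (fcomp F H) (fid G)) (u v : G) (p q : hom u v) :
  fmap H p = fmap H q -> p = q.
Proof.
  assert (Hb : forall r : hom u v, r = gcomp (b v) (gcomp (fmap F (fmap H r)) (ginv (b u)))).
  { intros r; pose proof (ntnat b r) as N; simpl in N.
    simpl; now rewrite gassoc, N, <- gassoc, ginv_r, gid_r. }
  intros E; now rewrite (Hb p), (Hb q), E.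
Qed.

Lemma aut_iso_of_equiv (F : Functor G G) : is_equiv F -> forall x, aut_iso x (F x).
Proof.
  intros [H [[a] [b]]] x.
  assert (Na : forall k : hom x x, fmap H (fmap F k) = gcomp (ginv (a x)) (gcomp k (a x))).
  { intros k; pose proof (ntnat a k) as N; simpl in N.
    simpl; now rewrite <- N, gassoc, ginv_l, gid_l. }
  exists (fun f => fmap F f), (fun g => gcomp (a x) (gcomp (fmap H g) (ginv (a x)))).
  repeat split.
  - intros f; now rewrite Na, !gassoc, ginv_r, gid_l, <- gassoc, ginv_r, gid_r.
  - intros g; apply (fmap_inj_of_left_quasi_inverse b).
    now rewrite Na, !gassoc, ginv_l, gid_l, <- gassoc, ginv_l, gid_r.
  - intros f g; apply fmap_comp.
Qed.

Lemma equiv_preserves_components : PresComps G.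
Proof.
  intros F hF [P [x0 E]] x h; simpl in *; subst P.
  exact (aut_iso_trans h (aut_iso_of_equiv hF x)).
Qed.

End AutIso.

(* Functor laws on a full subgroupoid, stated with morphisms of [G] so that [rewrite] finds them. *)
Section FullSubgroupoid.
Variables (G : Groupoid) (P : G -> Prop).

Lemma sub_fmap_id (F : Functor (SubG P) (SubG P)) (x : G) (h : P x) :
  @fmap _ _ F (exist P x h) (exist P x h) (gid x) = gid (proj1_sig (F (exist P x h))).
Proof. exact (fmap_id F (exist P x h)). Qed.

Lemma sub_fmap_comp (F : Functor (SubG P) (SubG P)) (x y z : G)
    (h : P x) (k : P y) (l : P z) (g : hom y z) (f : hom x y) :
  @fmap _ _ F (exist P x h) (exist P z l) (gcomp g f) =
  @gcomp G _ _ _ (@fmap _ _ F (exist P y k) (exist P z l) g)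
                 (@fmap _ _ F (exist P x h) (exist P y k) f).
Proof. exact (fmap_comp F (x:=exist P x h) (y:=exist P y k) (z:=exist P z l) g f). Qed.

Lemma sub_ntnat (F F' : Functor (SubG P) (SubG P)) (a : NatTrans F F') (x y : G)
    (h : P x) (k : P y) (f : hom x y) :
  @gcomp G _ _ _ (a (exist P y k)) (@fmap _ _ F (exist P x h) (exist P y k) f) =
  @gcomp G _ _ _ (@fmap _ _ F' (exist P x h) (exist P y k) f) (a (exist P x h)).
Proof. exact (ntnat a (x:=exist P x h) (y:=exist P y k) f). Qed.

End FullSubgroupoid.

Lemma idtohom_sub (G : Groupoid) (P : G -> Prop) (s t : SubG P) (e : s = t) :
  @idtohom (SubG P) s t e = @idtohom G _ _ (f_equal (@proj1_sig _ _) e).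
Proof. now destruct e. Qed.

Lemma idtohom_prod (I : Type) (M : I -> Groupoid) (a b : ProdG M) (e : a = b) (i : I) :
  idtohom e i = idtohom (f_equal (fun c => c i) e).
Proof. now destruct e. Qed.

Lemma idtohom_sym (K : Groupoid) (A B : SymG K) (e : A = B) (x : K) :
  idtohom e x = idtohom (f_equal (fun C : SymG K => proj1_sig C x) e).
Proof. now destruct e. Qed.

Definition component (G : Groupoid) (x : G) : HomogIdx G :=
  exist _ (aut_iso x) (ex_intro _ x eq_refl).

Notation home x := (exist (proj1_sig (component x)) x (aut_iso_refl x)).

Section Components.
Variable G : Groupoid.

Lemma component_unique (i : HomogIdx G) (x : G) : proj1_sig i x -> i = component x.
Proof.
  destruct i as [P [x0 ->]]; simpl; intros h.
  assert (E : aut_iso x0 = aut_iso x).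
  { apply functional_extensionality; intro y.
    apply propositional_extensionality; split; intro H.
    - exact (aut_iso_trans (aut_iso_sym h) H).
    - exact (aut_iso_trans h H). }
  now apply subset_eq_compat.
Qed.

Lemma component_ind (Q : forall i : HomogIdx G, SubG (proj1_sig i) -> Prop) :
  (forall x, Q (component x) (home x)) -> forall i s, Q i s.
Proof.
  intros Hx i [x h]; pose proof (component_unique h) as E; subst i.
  now rewrite (proof_irrelevance _ h (aut_iso_refl x)).
Qed.

End Components.

Notation SymProd G := (ProdM (fun i : HomogIdx G => SymM (HomogComp i))).

Section RestrictionMonoidal.
Variables (G : Groupoid) (pres : PresComps G).

(* The two sides agree on objects only up to the (irrelevant) membership proofs,
   so the identities are built componentwise in [G]. *)
Definition restriction_mu (A B : SymM G) :
  hom (tens (Restriction pres A) (Restriction pres B)) (Restriction pres (tens A B)).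
Proof.
  intros i; simpl; unshelve econstructor.
  - intros s; exact (gid (proj1_sig A (proj1_sig B (proj1_sig s)))).
  - intros; simpl; now rewrite gid_l, gid_r.
Defined.

Definition restriction_eps : hom (munit (SymProd G)) (Restriction pres (munit (SymM G))).
Proof.
  intros i; simpl; unshelve econstructor.
  - intros s; exact (gid (proj1_sig s)).
  - intros; simpl; now rewrite gid_l, gid_r.
Defined.

Definition restriction_monoidal : MonFunctor (SymM G) (SymProd G).
Proof.
  refine (@Build_MonFunctor _ _ (Restriction pres) restriction_mu restriction_eps _ _ _ _);
    intros; apply functional_extensionality_dep; intro i; apply nt_eq; intro s; simpl;
    now rewrite ?fmap_id, ?gid_l, ?gid_r.
Defined.

End RestrictionMonoidal.

Section Gluing.
Variable G : Groupoid.

Definition Family := forall i : HomogIdx G, Functor (SubG (proj1_sig i)) (SubG (proj1_sig i)).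

Definition glue_ob (F : Family) (x : G) : G := proj1_sig (F (component x) (home x)).

Lemma glue_ob_in (F : Family) (i : HomogIdx G) (s : SubG (proj1_sig i)) :
  proj1_sig (F i s) = glue_ob F (proj1_sig s).
Proof. revert i s; now apply component_ind. Qed.

Definition glue_map (F : Family) (x y : G) (f : hom x y) : hom (glue_ob F x) (glue_ob F y) :=
  gcomp (idtohom (glue_ob_in F (i:=component x) (exist _ y (aut_iso_of_hom f))))
        (@fmap _ _ (F (component x)) (home x) (exist _ y (aut_iso_of_hom f)) f).

Lemma glue_map_in (F : Family) (i : HomogIdx G) (s t : SubG (proj1_sig i))
    (f : hom (proj1_sig s) (proj1_sig t)) :
  glue_map F f =
  @gcomp G _ _ _ (idtohom (glue_ob_in F t))
    (@gcomp G _ _ _ (@fmap _ _ (F i) s t f) (idtohom (eq_sym (glue_ob_in F s)))).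
Proof.
  destruct s as [x h], t as [y k]; simpl in f.
  pose proof (component_unique h) as E; subst i.
  rewrite (proof_irrelevance _ h (aut_iso_refl x)), (proof_irrelevance _ k (aut_iso_of_hom f)).
  unfold glue_map; now rewrite idtohom_loop, gid_r.
Qed.

Lemma glue_map_at (F : Family) (i : HomogIdx G) (x y : G) (h : proj1_sig i x)
    (k : proj1_sig i y) (f : hom x y) :
  glue_map F f =
  @gcomp G _ _ _ (idtohom (glue_ob_in F (exist _ y k)))
    (@gcomp G _ _ _ (@fmap _ _ (F i) (exist _ x h) (exist _ y k) f)
       (idtohom (eq_sym (glue_ob_in F (exist _ x h))))).
Proof. exact (glue_map_in F (s:=exist _ x h) (t:=exist _ y k) f). Qed.

Lemma glue_map_id (F : Family) (x : G) : glue_map F (gid x) = gid (glue_ob F x).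
Proof.
  rewrite (glue_map_at F (i:=component x) (aut_iso_refl x) (aut_iso_refl x)), sub_fmap_id.
  now transport_simpl.
Qed.

Lemma glue_map_comp (F : Family) (x y z : G) (g : hom y z) (f : hom x y) :
  glue_map F (gcomp g f) = gcomp (glue_map F g) (glue_map F f).
Proof.
  rewrite (glue_map_at F (i:=component x) (aut_iso_refl x) (aut_iso_of_hom (gcomp g f))),
    (glue_map_at F (i:=component x) (aut_iso_refl x) (aut_iso_of_hom f) f),
    (glue_map_at F (i:=component x) (aut_iso_of_hom f) (aut_iso_of_hom (gcomp g f)) g).
  rewrite (sub_fmap_comp _ _ (aut_iso_of_hom f)).
  now transport_simpl.
Qed.

Definition glue (F : Family) : Functor G G :=
  @Build_Functor G G (glue_ob F) (glue_map F) (glue_map_id F) (glue_map_comp F).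

Lemma glue_map_idtohom (F : Family) (x y : G) (e : x = y) :
  glue_map F (idtohom e) = idtohom (f_equal (glue_ob F) e).
Proof. destruct e; apply glue_map_id. Qed.

Definition glue_nt_comp (F F' : Family) (a : forall i, NatTrans (F i) (F' i)) (x : G) :
  hom (glue_ob F x) (glue_ob F' x) := a (component x) (home x).

Lemma glue_nt_comp_in (F F' : Family) (a : forall i, NatTrans (F i) (F' i))
    (i : HomogIdx G) (s : SubG (proj1_sig i)) :
  glue_nt_comp a (proj1_sig s) =
  @gcomp G _ _ _ (idtohom (glue_ob_in F' s))
    (@gcomp G _ _ _ (a i s) (idtohom (eq_sym (glue_ob_in F s)))).
Proof.
  revert i s; apply component_ind; intros x; simpl.
  now rewrite !idtohom_loop, gid_l, gid_r.
Qed.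

Lemma glue_nt_comp_at (F F' : Family) (a : forall i, NatTrans (F i) (F' i))
    (i : HomogIdx G) (x : G) (h : proj1_sig i x) :
  glue_nt_comp a x =
  @gcomp G _ _ _ (idtohom (glue_ob_in F' (exist _ x h)))
    (@gcomp G _ _ _ (a i (exist _ x h)) (idtohom (eq_sym (glue_ob_in F (exist _ x h))))).
Proof. exact (glue_nt_comp_in a (exist _ x h)). Qed.

Definition glue_nt (F F' : Family) (a : forall i, NatTrans (F i) (F' i)) :
  NatTrans (glue F) (glue F').
Proof.
  refine (@Build_NatTrans G G (glue F) (glue F') (glue_nt_comp a) _).
  intros x y f; simpl.
  rewrite (glue_map_at F (i:=component x) (aut_iso_refl x) (aut_iso_of_hom f)),
    (glue_map_at F' (i:=component x) (aut_iso_refl x) (aut_iso_of_hom f)),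
    (glue_nt_comp_at a (i:=component x) (aut_iso_of_hom f)),
    (glue_nt_comp_at a (i:=component x) (aut_iso_refl x)).
  transport_simpl; f_equal; apply sub_ntnat.
Defined.

Definition fam_comp (F F' : Family) : Family := fun i => fcomp (F i) (F' i).

Definition fam_id : Family := fun i => fid _.

Definition glue_mu (F F' : Family) : NatTrans (fcomp (glue F) (glue F')) (glue (fam_comp F F')).
Proof.
  refine (@Build_NatTrans G G (fcomp (glue F) (glue F')) (glue (fam_comp F F'))
            (fun x => idtohom (eq_sym (glue_ob_in F (F' (component x) (home x))))) _).
  intros x y f; simpl.
  rewrite (glue_map_at F' (i:=component x) (aut_iso_refl x) (aut_iso_of_hom f)),
    (glue_map_at (fam_comp F F') (i:=component x) (aut_iso_refl x) (aut_iso_of_hom f)),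
    !glue_map_comp, !glue_map_idtohom, (glue_map_in F (i:=component x)).
  unfold fam_comp; simpl.
  transport_simpl; transport_congr.
Defined.

Lemma glue_map_fam_id (x y : G) (f : hom x y) : glue_map fam_id f = f.
Proof.
  rewrite (glue_map_at fam_id (i:=component x) (aut_iso_refl x) (aut_iso_of_hom f)); simpl.
  now transport_simpl.
Qed.

Definition glue_unit : NatTrans (fid G) (glue fam_id).
Proof.
  refine (@Build_NatTrans G G (fid G) (glue fam_id) (fun x => gid x) _).
  intros x y f; simpl; now rewrite glue_map_fam_id, gid_l, gid_r.
Defined.

Lemma glue_equiv (F : Family) : (forall i, is_equiv (F i)) -> is_equiv (glue F).
Proof.
  intros hF.
  pose (H := fun i => proj1_sig (constructive_indefinite_description _ (hF i))).
  pose (hH := fun i => proj2_sig (constructive_indefinite_description _ (hF i))).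
  pose (a := fun i => epsilon (proj1 (hH i)) (fun _ => True)).
  pose (b := fun i => epsilon (proj2 (hH i)) (fun _ => True)).
  exists (glue H); split; constructor.
  - exact (vcomp (ntinv glue_unit) (vcomp (glue_nt (F' := fam_id) a) (glue_mu H F))).
  - exact (vcomp (ntinv glue_unit) (vcomp (glue_nt (F' := fam_id) b) (glue_mu F H))).
Qed.

End Gluing.

Section GluingMonoidal.
Variable G : Groupoid.

Definition family_of (a : SymProd G) : Family G := fun i => proj1_sig (a i).

Definition glue_sym (a : SymProd G) : SymM G :=
  exist _ (glue (family_of a)) (glue_equiv (fun i => proj2_sig (a i))).

Definition gluing : Functor (SymProd G) (SymM G).
Proof.
  refine (@Build_Functor _ (SymM G) glue_sym
            (fun a b f => glue_nt (F:=family_of a) (F':=family_of b) f) _ _);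
    intros; now apply nt_eq.
Defined.

Definition gluing_monoidal : MonFunctor (SymProd G) (SymM G).
Proof.
  refine (@Build_MonFunctor _ (SymM G) gluing
            (fun a b => glue_mu (family_of a) (family_of b)) (glue_unit G) _ _ _ _);
    intros; apply nt_eq; intro x; simpl.
  1: unfold glue_ob; rewrite (glue_nt_comp_in f), (glue_map_in (family_of a)).
  (* Associators and unitors of [SymM] are identities and [glue_mu] consists of transports. *)
  all: unfold glue_nt_comp; simpl; rewrite ?glue_map_id, ?glue_map_idtohom;
    transport_simpl; transport_congr.
Defined.

End GluingMonoidal.

Section Inverse.
Variables (G : Groupoid) (pres : PresComps G).

Lemma glue_restr (F : Functor G G) (hF : is_equiv F) :
  glue (fun i => restr (@pres F hF i)) = F.
Proof.
  refine (@functor_ext G G (glue (fun i => restr (@pres F hF i))) F (fun x => eq_refl) _).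
  intros x y f; simpl.
  rewrite (glue_map_at _ (i:=component x) (aut_iso_refl x) (aut_iso_of_hom f)); simpl.
  now transport_simpl.
Qed.

Lemma restr_glue (F : Family G) (i : HomogIdx G)
    (p : forall x, proj1_sig i x -> proj1_sig i (glue F x)) :
  restr p = F i.
Proof.
  refine (@functor_ext _ _ (restr p) (F i)
            (fun s => eq_sig_hprop (fun _ => proof_irrelevance _) (restr p s) (F i s)
                                   (eq_sym (glue_ob_in F s))) _).
  intros s t f; rewrite !idtohom_sub; simpl; rewrite (glue_map_in F f).
  transport_simpl; transport_congr.
Qed.

Lemma gluing_after_restriction : fcomp (gluing G) (restriction_monoidal pres) = fid (SymM G).
Proof.
  assert (e : forall A : SymM G, fcomp (gluing G) (restriction_monoidal pres) A = A).
  { intros [F hF]; apply subset_eq_compat, glue_restr. }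
  refine (@functor_ext _ _ _ (fid _) e _); intros A B f; apply nt_eq; intros x.
  simpl; rewrite (idtohom_sym (e B)), (idtohom_sym (eq_sym (e A))), !idtohom_loop.
  unfold glue_nt_comp; simpl; now rewrite gid_l, gid_r.
Qed.

Lemma restriction_after_gluing : fcomp (restriction_monoidal pres) (gluing G) = fid (SymProd G).
Proof.
  assert (e : forall a : SymProd G, fcomp (restriction_monoidal pres) (gluing G) a = a).
  { intros a; apply functional_extensionality_dep; intros i.
    apply (eq_sig_hprop (fun _ => proof_irrelevance _)), restr_glue. }
  refine (@functor_ext _ _ _ (fid _) e _); intros a b f.
  apply functional_extensionality_dep; intros i.
  apply nt_eq; intros s.
  simpl; rewrite !idtohom_prod, (idtohom_sym (f_equal (fun c : SymProd G => c i) (e b))),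
    (idtohom_sym (f_equal (fun c : SymProd G => c i) (eq_sym (e a)))).
  rewrite !(idtohom_sub (P:=proj1_sig i)), (glue_nt_comp_in f).
  now transport_simpl.
Qed.

End Inverse.

Theorem theorem4p10 (G : Groupoid) :
  exists pres : PresComps G,
  exists Phi : MonFunctor (SymM G)
                 (ProdM (fun i : HomogIdx G => SymM (HomogComp i))),
    mf Phi = Restriction pres /\ is_2group_iso Phi.
Proof.
  set (pres := @equiv_preserves_components G).
  exists pres, (restriction_monoidal pres); split; [reflexivity |].
  exists (gluing_monoidal G); split.
  - apply gluing_after_restriction.
  - apply restriction_after_gluing.
Qed.
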